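(* Let $X$ be a set, let $f\in\omega^{\subset\omega}$ be $\mathrm{DNR}^X$, and let $U$ be a $2$-branching set of extensions of $f$. Then there is a $g\in U$ which is $\mathrm{DNR}^X$.
   Context: $\omega^{\subset\omega}$ is the set of partial functions from $\omega$ to $\omega$ with finite domain. $f\in\omega^{\subset\omega}$ is $\mathrm{DNR}^X$ if for every $e\in\operatorname{dom}(f)$ with $\varphi^X_e(e)\downarrow$, $\varphi^X_e(e)\neq f(e)$. For $f\in\omega^{\subset\omega}$, an $n$-branching set of extensions of $f$ of length $k$ is defined by induction on $k$: of length $1$, it is a set $U$ of $n$ functions such that for some fixed $x\notin\operatorname{dom}(f)$ each $g\in U$ satisfies $f\subseteq g$ and $\operatorname{dom}(g)=\operatorname{dom}(f)\cup\{x\}$; if $U_0$ is an $n$-branching set of extensions of $f$ of length $k$ and for each $g\in U_0$, $U_g$ is an $n$-branching set of extensions of $g$ of length $1$, then $\bigcup_{g\in U_0}U_g$ is an $n$-branching set of extensions of $f$ of length $k+1$. An $n$-branching set of extensions is one of some length $k\geq 1$. *)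

From HB Require Import structures.
From mathcomp Require Import all_boot.
From mathcomp Require Import finmap.
Set Implicit Arguments. Unset Strict Implicit. Unset Printing Implicit Defensive.
Local Open Scope fset_scope.
Local Open Scope fmap_scope.

(* Oracle computation: register machines with an oracle X : nat -> bool.  *)
(* An instruction is a triple (op, a, b):                                  *)
(*   op = 0 : INC   R_a            ; go to next instruction                *)
(*   op = 1 : if R_a = 0 jump to instruction b, else R_a := R_a - 1, next *)
(*   op = 2 : R_a := (if X (R_a) then 1 else 0) ; next  (oracle query)    *)
(*   op >= 3, or pc outside the program : HALT                             *)
(* Input is placed in R_0 (all others 0); the output is R_0 at halting.   *)
(* The e-th machine is unpickle e (a Goedel numbering of all programs);   *)
(* if unpickle e = None the e-th machine is nowhere defined.               *)

Definition instr := (nat * nat * nat)%type.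
Definition program := seq instr.
Definition config := (nat * (nat -> nat))%type.

Definition upd (r : nat -> nat) (a v : nat) : nat -> nat :=
  fun i => if i == a then v else r i.

Definition step (X : nat -> bool) (p : program) (c : config) : option config :=
  let: (pc, r) := c in
  if pc < size p then
    let: (op, a, b) := nth (3, 0, 0) p pc in
    match op with
    | 0 => Some (pc.+1, upd r a (r a).+1)
    | 1 => if r a == 0 then Some (b, r) else Some (pc.+1, upd r a (r a).-1)
    | 2 => Some (pc.+1, upd r a (if X (r a) then 1 else 0))
    | _ => None
    end
  else None.

Fixpoint run (X : nat -> bool) (p : program) (k : nat) (c : config)
  : option (nat -> nat) :=
  match k with
  | 0 => None
  | k'.+1 => match step X p c with
             | None => Some c.2
             | Some c' => run X p k' c'
             end
  end.

Definition init (x : nat) : nat -> nat := fun i => if i == 0 then x else 0.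

(* phi_halts X e x v  <->  phi^X_e(x) converges with value v *)
Definition phi_halts (X : nat -> bool) (e x v : nat) : Prop :=
  exists p : program, @choice.unpickle program e = Some p /\
    exists k r, run X p k (0, init x) = Some r /\ r 0 = v.

Definition pfun := {fmap nat -> nat}.

Definition pfun_sub (f g : pfun) : Prop :=
  forall x v, f.[? x] = Some v -> g.[? x] = Some v.

Definition DNR (X : nat -> bool) (f : pfun) : Prop :=
  forall e v, f.[? e] = Some v -> phi_halts X e e v -> False.

Inductive branching (n : nat) : pfun -> {fset pfun} -> nat -> Prop :=
  | branching1 (f : pfun) (U : {fset pfun}) (x : nat) :
      x \notin domf f ->
      #|` U| = n ->
      (forall g, g \in U -> pfun_sub f g /\ domf g = x |` domf f) ->
      branching n f U 1
  | branchingS (f : pfun) (U0 U : {fset pfun}) (k : nat)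
      (Ug : pfun -> {fset pfun}) :
      branching n f U0 k ->
      (forall g, g \in U0 -> branching n g (Ug g) 1) ->
      (forall h, h \in U <-> exists2 g, g \in U0 & h \in Ug g) ->
      branching n f U k.+1.

Definition branching_set (n : nat) (f : pfun) (U : {fset pfun}) : Prop :=
  exists k, 1 <= k /\ branching n f U k.

From HB Require Import structures.
From mathcomp Require Import all_boot.
From mathcomp Require Import finmap.
From Stdlib Require Import Classical.
Set Implicit Arguments. Unset Strict Implicit.
Local Open Scope fset_scope.
Local Open Scope fmap_scope.

(** Two distinct one-point extensions of [f] at [x] differ at [x], so among
    [n >= 2] of them at least one avoids the value [phi^X_x(x)]; that one is
    again DNR.  Iterating along the levels of a branching set yields a DNR
    leaf.  The only classical step is the case split on whether [phi^X_x(x)]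
    converges. *)

Lemma run_deterministic X p k k' c r r' :
  run X p k c = Some r -> run X p k' c = Some r' -> r = r'.
Proof.
elim: k k' c => [|k IH] [|k'] c //=.
case: (step X p c) => [c'|]; last by move=> [<-] [<-].
exact: IH.
Qed.

Lemma phi_halts_functional X e x v w :
  phi_halts X e x v -> phi_halts X e x w -> v = w.
Proof.
move=> [p [Hp [k [r [Hr <-]]]]] [p' [Hp' [k' [r' [Hr' <-]]]]].
rewrite Hp in Hp'; case: Hp' => <- in Hr'.
by rewrite (run_deterministic Hr Hr').
Qed.

Lemma cardfs_gt1_neq (K : choiceType) (A : {fset K}) :
  1 < #|` A| -> exists g h, [/\ g \in A, h \in A & g != h].
Proof.
case: (fset_0Vmem A) => [->|[g gA]]; first by rewrite cardfs0.
rewrite (cardfsD1 g) gA ltnS cardfs_gt0 => /fset0Pn [h].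
by rewrite in_fsetD1 => /andP [hg hA]; exists g, h; rewrite eq_sym hg.
Qed.

Section OnePointExtension.

Variables (f : pfun) (x : nat).

Definition one_point_ext (g : pfun) : Prop :=
  pfun_sub f g /\ domf g = x |` domf f.

Lemma fnd_one_point_ext g : one_point_ext g ->
  forall k, g.[? k] = if k == x then g.[? x] else f.[? k].
Proof.
move=> [fg dom_g] k; case: eqP => [->//|/eqP kx].
case kf: (k \in domf f); first by rewrite (in_fnd kf); apply: fg; rewrite in_fnd.
have kg : k \notin domf g by rewrite dom_g in_fset1U (negPf kx) kf.
by rewrite (not_fnd kg) not_fnd ?kf.
Qed.

Lemma one_point_ext_inj g h : one_point_ext g -> one_point_ext h ->
  g.[? x] = h.[? x] -> g = h.
Proof.
move=> eg eh gh_x; apply/fmapP => k.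
by rewrite (fnd_one_point_ext eg) (fnd_one_point_ext eh) gh_x.
Qed.

Lemma one_point_ext_avoid (U : {fset pfun}) w : 1 < #|` U| ->
  (forall g, g \in U -> one_point_ext g) ->
  exists2 g, g \in U & g.[? x] <> Some w.
Proof.
move=> /cardfs_gt1_neq [g [h [gU hU gh]]] extU.
case: (g.[? x] =P Some w) => [g_w|]; last by exists g.
exists h => // h_w; move/eqP: gh; apply.
by apply: one_point_ext_inj (extU _ gU) (extU _ hU) _; rewrite g_w h_w.
Qed.

Lemma DNR_one_point_ext X g : DNR X f -> one_point_ext g ->
  (forall w, phi_halts X x x w -> g.[? x] <> Some w) -> DNR X g.
Proof.
move=> Df eg avoid e v; rewrite (fnd_one_point_ext eg e).
by case: eqP => [-> g_v /avoid|_ /Df].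
Qed.

Lemma one_point_exts_DNR X (U : {fset pfun}) : DNR X f -> 1 < #|` U| ->
  (forall g, g \in U -> one_point_ext g) -> exists2 g, g \in U & DNR X g.
Proof.
move=> Df U_gt1 extU.
have [[w xx_w]|diverges] := classic (exists w, phi_halts X x x w).
  have [g gU g_x] := one_point_ext_avoid w U_gt1 extU.
  exists g => //; apply: DNR_one_point_ext (extU g gU) _ => // w'.
  by move=> /(phi_halts_functional xx_w) <-.
have [g [_ [gU _ _]]] := cardfs_gt1_neq U_gt1.
exists g => //; apply: DNR_one_point_ext (extU g gU) _ => // w xx_w.
by case: diverges; exists w.
Qed.

End OnePointExtension.

Lemma branching_DNR X n f U k : 1 < n -> branching n f U k -> DNR X f ->
  exists2 g, g \in U & DNR X g.
Proof.
move=> n_gt1; elim=> {f U k} [f U x _ cardU extU|f U0 U k Ug _ IH0 _ IHg defU] Df.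
  by apply: one_point_exts_DNR Df _ extU; rewrite cardU.
have [g gU0 Dg] := IH0 Df.
have [h hUg Dh] := IHg g gU0 Dg.
by exists h => //; apply/defU; exists g.
Qed.

Theorem mainTheorem6 (X : nat -> bool) (f : pfun) (U : {fset pfun}) :
  DNR X f -> branching_set 2 f U -> exists2 g, g \in U & DNR X g.
Proof.
by move=> Df [k [_ bU]]; apply: branching_DNR bU Df.
Qed.
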